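(* Let $\mathcal{H},\mathcal{K}$ be real or complex Hilbert spaces, let $S:\mathcal{H}\to\mathcal{K}$ and $T:\mathcal{K}\to\mathcal{H}$ be (not necessarily densely defined or closed) linear operators, and set $S_0:=S\cap T^*$ and $T_0:=T\cap S^*$. The following statements are equivalent: (i) $S$ and $T$ are both densely defined and $S^*=T$ and $T^*=S$; (ii) $\operatorname{ran}(I+T_0S_0)=\mathcal{H}$ and $\operatorname{ran}(I+S_0T_0)=\mathcal{K}$.
   Context: Operators are identified with their graphs (linear relations). For a linear relation $R\subset\mathcal{H}\times\mathcal{K}$ the adjoint is the linear relation $R^*=\{(k',h')\in\mathcal{K}\times\mathcal{H}:\langle k,k'\rangle=\langle h,h'\rangle\ \forall(h,k)\in R\}$, possibly multivalued if $R$ is not densely defined. $S\cap T^*$ is the intersection of the graph of $S$ with $T^*$; it is an operator $S_0$ with $\operatorname{dom} S_0\subset\operatorname{dom} S$, and similarly $T_0$. Products such as $T_0S_0$ are the usual compositions of operators on their natural domains, $I$ denotes the identity. *)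

From HB Require Import structures.
From mathcomp Require Import all_boot all_algebra.
From mathcomp Require Import reals.
From mathcomp.real_closed Require Export complex.
Export GRing.Theory Num.Theory.

Set Implicit Arguments.
Unset Strict Implicit.
Unset Printing Implicit Defensive.

Local Open Scope ring_scope.

(* Inner product spaces / Hilbert spaces over a scalar field F with a  *)
(* conjugation conj (conj = id for real spaces, conjC for complex).    *)

Definition is_inner_product (F : numFieldType) (conj : F -> F)
    (V : lmodType F) (ip : V -> V -> F) : Prop :=
  [/\ (forall (a : F) (x y z : V), ip (a *: x + y) z = a * ip x z + ip y z),
      (forall x y : V, ip y x = conj (ip x y)),
      (forall x : V, 0 <= ip x x) &
      (forall x : V, ip x x = 0 -> x = 0)].

Definition nrm2 (F : numFieldType) (V : lmodType F) (ip : V -> V -> F)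
  (x : V) : F := ip x x.

Definition ip_complete (F : numFieldType) (V : lmodType F)
    (ip : V -> V -> F) : Prop :=
  forall u : nat -> V,
    (forall e : F, 0 < e -> exists N : nat, forall m n : nat,
        (N <= m)%N -> (N <= n)%N -> nrm2 ip (u m - u n) < e) ->
    exists x : V, forall e : F, 0 < e -> exists N : nat, forall n : nat,
        (N <= n)%N -> nrm2 ip (u n - x) < e.

Definition is_hilbert (F : numFieldType) (conj : F -> F)
    (V : lmodType F) (ip : V -> V -> F) : Prop :=
  is_inner_product conj ip /\ ip_complete ip.

Definition linrel (V W : Type) := V -> W -> Prop.

Definition is_linear_relation (F : numFieldType) (V W : lmodType F)
    (R : linrel V W) : Prop :=
  R 0 0 /\
  (forall (a : F) (x y : V) (x' y' : W),
      R x x' -> R y y' -> R (a *: x + y) (a *: x' + y')).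

Definition is_operator (F : numFieldType) (V W : lmodType F)
    (R : linrel V W) : Prop :=
  is_linear_relation R /\ (forall w : W, R 0 w -> w = 0).

Definition adjoint (F : numFieldType) (V W : lmodType F)
    (ipV : V -> V -> F) (ipW : W -> W -> F) (R : linrel V W) : linrel W V :=
  fun k' h' => forall (h : V) (k : W), R h k -> ipW k k' = ipV h h'.

Definition rel_cap (V W : Type) (R1 R2 : linrel V W) : linrel V W :=
  fun v w => R1 v w /\ R2 v w.

Definition rel_eq (V W : Type) (R1 R2 : linrel V W) : Prop :=
  forall v w, R1 v w <-> R2 v w.

Definition dom (V W : Type) (R : linrel V W) : V -> Prop :=
  fun v => exists w, R v w.

Definition dense (F : numFieldType) (V : lmodType F) (ip : V -> V -> F)
    (A : V -> Prop) : Prop :=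
  forall (v : V) (e : F), 0 < e -> exists a, A a /\ nrm2 ip (v - a) < e.

Definition densely_defined (F : numFieldType) (V W : lmodType F)
    (ip : V -> V -> F) (R : linrel V W) : Prop :=
  dense ip (dom R).

(* range of I + B A, where A : V -> W and B : W -> V, with the product
   B A defined on its natural domain {v in dom A | A v in dom B}.      *)
Definition ran_I_plus_comp (F : numFieldType) (V W : lmodType F)
    (A : linrel V W) (B : linrel W V) : V -> Prop :=
  fun y => exists (h : V) (k : W) (h' : V), A h k /\ B k h' /\ y = h + h'.

From mathcomp Require Import all_boot all_order all_algebra.
From mathcomp Require Import reals.
From mathcomp.real_closed Require Import complex.
From mathcomp Require Import ring.
Import Order.LTheory GRing.Theory Num.Theory.

(* The argument rests on the projection theorem, applied to subspaces of H and
   to graphs in H x K.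
   (i) -> (ii): here S0 = S = T^* and T0 = T = S^*. Projecting (h, 0) onto the
   graph of S = T^*, which is closed, writes it as (x, S x) + (h - x, - S x)
   with the second summand orthogonal to that graph, i.e. (S x, h - x) lies in
   the graph of S^* = T; hence h = x + T S x.
   (ii) -> (i): T0 is always contained in S0^*. Conversely, for (k, h') in S0^*
   the two range conditions provide (z, T0 z) in T0 such that
   (k, h') - (z, T0 z) = (S0 x, - x) for some x in dom S0, and pairing this
   with (x, S0 x) gives |x|^2 + |S0 x|^2 = 0. Thus S0^* = T0 is single-valued,
   which forces dom S0, hence dom S, to be dense; and
   S^* <= S0^* = T0 <= T <= T^** <= S0^* = T0 <= S^* gives S^* = T.
   The scalars are an abstract numFieldType with a conjugation, infima of
   nonnegative sets and an Archimedean property, which covers R and R[i]. *)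

Set Implicit Arguments.
Unset Strict Implicit.
Unset Printing Implicit Defensive.
Local Open Scope ring_scope.

Lemma eq0_of_sqr_norm_small (F : numFieldType) (z c : F) : c \is Num.real ->
  (forall e, 0 < e -> `|z| ^+ 2 <= c * e) -> z = 0.
Proof.
move=> c_real small_z.
suff : `|z| ^+ 2 == 0 by rewrite expf_eq0 /= normr_eq0 => /eqP.
rewrite eq_le exprn_ge0 // andbT.
have [c_le0|c_gt0] := real_leP c_real (real0 F).
  by apply: le_trans (small_z 1 ltr01) _; rewrite mulr1.
apply/ler_addgt0Pr => e e_gt0; rewrite add0r.
have := small_z _ (divr_gt0 e_gt0 c_gt0).
by rewrite mulrCA divff ?gt_eqF // mulr1.
Qed.

Lemma sqr_normD_le (F : numDomainType) (a b : F) :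
  `|a + b| ^+ 2 <= 2 * (`|a| ^+ 2 + `|b| ^+ 2).
Proof.
apply: (@le_trans _ _ ((`|a| + `|b|) ^+ 2)).
  by rewrite lerXn2r ?nnegrE ?addr_ge0 // ler_normD.
rewrite -subr_ge0.
have -> : 2 * (`|a| ^+ 2 + `|b| ^+ 2) - (`|a| + `|b|) ^+ 2 = (`|a| - `|b|) ^+ 2.
  by ring.
by rewrite real_exprn_even_ge0 ?realB.
Qed.

Lemma invS_le (F : numFieldType) (m n : nat) : (m <= n)%N ->
  n.+1%:R^-1 <= m.+1%:R^-1 :> F.
Proof. by move=> le_mn; rewrite lef_pV2 ?posrE ?ltr0Sn // ler_nat ltnS. Qed.

Definition ge0_has_inf (F : numFieldType) : Prop :=
  forall A : F -> Prop, (exists a, A a) -> (forall a, A a -> 0 <= a) ->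
  exists d, (forall a, A a -> d <= a) /\
            (forall e, 0 < e -> exists a, A a /\ a < d + e).

Definition invS_archimedean (F : numFieldType) : Prop :=
  forall e : F, 0 < e -> exists N : nat, N.+1%:R^-1 < e.

Definition subspace (F : numFieldType) (V : lmodType F) (M : V -> Prop)
    : Prop :=
  M 0 /\ forall (a : F) (x y : V), M x -> M y -> M (a *: x + y).

(* With the next three definitions, [dense ip A] unfolds to
   [forall v, adherent ip A v] and [ip_complete ip] to
   [forall u, cauchy_seq ip u -> exists x, converges_to ip u x]. *)
Definition adherent (F : numFieldType) (V : lmodType F) (ip : V -> V -> F)
    (A : V -> Prop) (v : V) : Prop :=
  forall e, 0 < e -> exists a, A a /\ nrm2 ip (v - a) < e.

Definition cauchy_seq (F : numFieldType) (V : lmodType F) (ip : V -> V -> F)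
    (u : nat -> V) : Prop :=
  forall e, 0 < e -> exists N : nat, forall m n : nat,
    (N <= m)%N -> (N <= n)%N -> nrm2 ip (u m - u n) < e.

Definition converges_to (F : numFieldType) (V : lmodType F)
    (ip : V -> V -> F) (u : nat -> V) (x : V) : Prop :=
  forall e, 0 < e -> exists N : nat, forall n : nat,
    (N <= n)%N -> nrm2 ip (u n - x) < e.

Section InnerProduct.
Variables (F : numFieldType) (conj : {rmorphism F -> F}).
Hypothesis conj_normK : forall a : F, a * conj a = `|a| ^+ 2.
Variables (V : lmodType F) (ip : V -> V -> F).
Hypothesis ipV : is_inner_product conj ip.

Lemma ipDZl a x y z : ip (a *: x + y) z = a * ip x z + ip y z.
Proof. by case: ipV. Qed.
Lemma ipC x y : ip y x = conj (ip x y).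
Proof. by case: ipV. Qed.
Lemma nrm2_ge0 x : 0 <= nrm2 ip x.
Proof. by case: ipV => _ _ + _; apply. Qed.
Lemma nrm2_eq0 x : nrm2 ip x = 0 -> x = 0.
Proof. by case: ipV => _ _ _; apply. Qed.

Lemma ipDl x y z : ip (x + y) z = ip x z + ip y z.
Proof. by rewrite -[x in LHS]scale1r ipDZl mul1r. Qed.
Lemma ip0l z : ip 0 z = 0.
Proof. by apply: (@addrI _ (ip 0 z)); rewrite -ipDl !addr0. Qed.
Lemma ipZl a x z : ip (a *: x) z = a * ip x z.
Proof. by rewrite -[_ *: _]addr0 ipDZl ip0l addr0. Qed.
Lemma ipNl x z : ip (- x) z = - ip x z.
Proof. by rewrite -scaleN1r ipZl mulN1r. Qed.
Lemma ipBl x y z : ip (x - y) z = ip x z - ip y z.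
Proof. by rewrite ipDl ipNl. Qed.
Lemma ip0r z : ip z 0 = 0.
Proof. by rewrite ipC ip0l rmorph0. Qed.
Lemma ipDr x y z : ip z (x + y) = ip z x + ip z y.
Proof. by rewrite ipC ipDl rmorphD -!ipC. Qed.
Lemma ipZr a x z : ip z (a *: x) = conj a * ip z x.
Proof. by rewrite ipC ipZl rmorphM -ipC. Qed.
Lemma ipNr x z : ip z (- x) = - ip z x.
Proof. by rewrite ipC ipNl rmorphN -ipC. Qed.
Lemma ipBr x y z : ip z (x - y) = ip z x - ip z y.
Proof. by rewrite ipDr ipNr. Qed.

Lemma nrm2_subC x y : nrm2 ip (x - y) = nrm2 ip (y - x).
Proof. by rewrite /nrm2 -opprB ipNl ipNr opprK. Qed.

Lemma nrm2_sub_proj x m : nrm2 ip m != 0 ->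
  nrm2 ip (x - (ip x m / nrm2 ip m) *: m) =
  nrm2 ip x - `|ip x m| ^+ 2 / nrm2 ip m.
Proof.
move=> m_neq0; rewrite /nrm2 in m_neq0 *.
rewrite !ipBl !ipBr !ipZl !ipZr -conj_normK rmorphM fmorphV -(ipC m m).
by rewrite [ip m x]ipC; field.
Qed.

Lemma cauchy_schwarz x m : `|ip x m| ^+ 2 <= nrm2 ip x * nrm2 ip m.
Proof.
have [m0|m_neq0] := eqVneq (nrm2 ip m) 0.
  by rewrite (nrm2_eq0 m0) /nrm2 !ip0r normr0 expr0n mulr0.
have m_gt0 : 0 < nrm2 ip m by rewrite lt_def m_neq0 nrm2_ge0.
by rewrite -ler_pdivrMr // -subr_ge0 -nrm2_sub_proj //; apply: nrm2_ge0.
Qed.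

Lemma nrm2_sub_midpoint v x y :
  nrm2 ip (x - y) =
  2 * nrm2 ip (v - x) + 2 * nrm2 ip (v - y)
  - 4 * nrm2 ip (v - 2^-1 *: (x + y)).
Proof.
rewrite /nrm2 !ipBl !ipBr !ipZl !ipZr !ipDl !ipDr fmorphV rmorph_nat.
by field.
Qed.

End InnerProduct.

Section Projection.
Variables (F : numFieldType) (conj : {rmorphism F -> F}).
Hypothesis conj_normK : forall a : F, a * conj a = `|a| ^+ 2.
Hypotheses (ge0_inf : ge0_has_inf F) (archi_invS : invS_archimedean F).
Variables (V : lmodType F) (ip : V -> V -> F).
Hypothesis ipV : is_inner_product conj ip.
Variable M : V -> Prop.
Hypothesis M_sub : subspace M.
Variable v : V.

Section NearMinimizers.
Variable d : F.
Hypothesis d_lb : forall a, M a -> d <= nrm2 ip (v - a).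

Lemma near_minimizer_orth a m e : M a -> M m -> nrm2 ip (v - a) < d + e ->
  `|ip (v - a) m| ^+ 2 <= e * nrm2 ip m.
Proof.
move=> Ma Mm lt_a.
have [m0|m_neq0] := eqVneq (nrm2 ip m) 0.
  by rewrite (nrm2_eq0 ipV m0) (ip0r ipV) normr0 expr0n /nrm2 (ip0r ipV) mulr0.
have m_gt0 : 0 < nrm2 ip m by rewrite lt_def m_neq0 (nrm2_ge0 ipV).
set c := ip (v - a) m.
have M_shift : M (a + (c / nrm2 ip m) *: m) by rewrite addrC; apply: M_sub.2.
have := d_lb M_shift; rewrite opprD addrA (nrm2_sub_proj conj_normK) // => le_d.
have : d + `|c| ^+ 2 / nrm2 ip m < d + e.
  by apply: le_lt_trans lt_a; rewrite -lerBrDr.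
by rewrite ltrD2l ltr_pdivrMr // => /ltW.
Qed.

Lemma near_minimizers_cauchy (u : nat -> V) : (forall n, M (u n)) ->
  (forall n, nrm2 ip (v - u n) < d + n.+1%:R^-1) -> cauchy_seq ip u.
Proof.
move=> Mu u_near e e_gt0.
have [N ltN] := archi_invS (divr_gt0 e_gt0 (ltr0Sn F 3)).
exists N => m n le_Nm le_Nn.
have M_mid : M (2^-1 *: (u m + u n)).
  have := M_sub.2 1 _ _ (Mu m) (Mu n); rewrite scale1r => M_add.
  by have := M_sub.2 2^-1 _ _ M_add M_sub.1; rewrite addr0.
set eN := N.+1%:R^-1 in ltN *.
have near_N k : (N <= k)%N -> nrm2 ip (v - u k) < d + eN.
  by move=> le_Nk; apply: lt_le_trans (u_near k) _; rewrite lerD2l invS_le.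
rewrite (nrm2_sub_midpoint ipV v); set c := nrm2 ip (v - _ *: _).
apply: (@lt_trans _ _ (4 * eN)); last by rewrite mulrC -ltr_pdivlMr.
rewrite -subr_gt0.
have -> : 4 * eN - (2 * nrm2 ip (v - u m) + 2 * nrm2 ip (v - u n) - 4 * c)
    = 2 * (d + eN - nrm2 ip (v - u m)) + 2 * (d + eN - nrm2 ip (v - u n))
      + 4 * (c - d) by ring.
rewrite ltr_wpDr ?mulr_ge0 ?subr_ge0 ?d_lb //.
by rewrite addr_gt0 // mulr_gt0 // subr_gt0 near_N.
Qed.

Lemma near_minimizers_limit_orth (u : nat -> V) p m : (forall n, M (u n)) ->
  (forall n, nrm2 ip (v - u n) < d + n.+1%:R^-1) -> converges_to ip u p ->
  M m -> ip m (v - p) = 0.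
Proof.
move=> Mu u_near u_to_p Mm; rewrite (ipC ipV).
apply/eqP; rewrite fmorph_eq0; apply/eqP.
apply: (@eq0_of_sqr_norm_small _ _ (4 * nrm2 ip m)).
  by rewrite ger0_real // mulr_ge0 // (nrm2_ge0 ipV).
move=> e e_gt0; have [N1 lt_N1] := archi_invS e_gt0.
have [N2 lt_N2] := u_to_p e e_gt0; set n := maxn N1 N2.
have -> : v - p = (v - u n) + (u n - p) by rewrite addrA subrK.
rewrite (ipDl ipV); apply: le_trans (sqr_normD_le _ _) _.
have bound1 : `|ip (v - u n) m| ^+ 2 <= e * nrm2 ip m.
  apply: le_trans (near_minimizer_orth (Mu n) Mm (u_near n)) _.
  rewrite ler_wpM2r ?(nrm2_ge0 ipV) //; apply: le_trans (ltW lt_N1).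
  by rewrite invS_le ?leq_maxl.
have bound2 : `|ip (u n - p) m| ^+ 2 <= e * nrm2 ip m.
  apply: le_trans (cauchy_schwarz conj_normK ipV _ _) _.
  by rewrite ler_wpM2r ?(nrm2_ge0 ipV) // ltW // lt_N2 ?leq_maxr.
have -> : 4 * nrm2 ip m * e = 2 * (e * nrm2 ip m + e * nrm2 ip m) by ring.
by rewrite ler_pM2l // lerD.
Qed.

End NearMinimizers.

Hypothesis ip_cplt : ip_complete ip.

Lemma projection :
  exists p, adherent ip M p /\ forall m, M m -> ip m (v - p) = 0.
Proof.
pose dists r := exists a, M a /\ r = nrm2 ip (v - a).
have [d [d_lb d_approx]] : exists d, (forall r, dists r -> d <= r) /\
    (forall e, 0 < e -> exists r, dists r /\ r < d + e).
  apply: ge0_inf; first by exists (nrm2 ip (v - 0)); exists 0; case: M_sub.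
  by move=> _ [a [_ ->]]; exact: (nrm2_ge0 ipV).
have d_lb' a : M a -> d <= nrm2 ip (v - a) by move=> Ma; apply: d_lb; exists a.
have /boolp.choice [u u_near] n :
    exists a, M a /\ nrm2 ip (v - a) < d + n.+1%:R^-1.
  have invS_gt0 : (0 : F) < n.+1%:R^-1 by rewrite invr_gt0 ltr0Sn.
  by have [_ [[a [Ma ->]] lt_a]] := d_approx _ invS_gt0; exists a.
have Mu n : M (u n) := (u_near n).1.
have u_close n : nrm2 ip (v - u n) < d + n.+1%:R^-1 := (u_near n).2.
have [p u_to_p] := ip_cplt (near_minimizers_cauchy d_lb' Mu u_close).
exists p; split=> [e e_gt0|m].
  have [N le_N] := u_to_p e e_gt0.
  by exists (u N); split; [exact: Mu | rewrite (nrm2_subC ipV) le_N].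
exact: (near_minimizers_limit_orth d_lb' Mu u_close u_to_p).
Qed.

End Projection.

Lemma graph_subspace (F : numFieldType) (V W : lmodType F) (R : linrel V W) :
  is_linear_relation R -> subspace (fun z : V * W => R z.1 z.2).
Proof. by case=> R00 R_lin; split => // a x y; apply: R_lin. Qed.

Lemma dom_subspace (F : numFieldType) (V W : lmodType F) (R : linrel V W) :
  is_linear_relation R -> subspace (dom R).
Proof.
case=> R00 R_lin; split; first by exists 0.
by move=> a x y [x' Rxx'] [y' Ryy']; exists (a *: x' + y'); apply: R_lin.
Qed.

Lemma cap_linear (F : numFieldType) (V W : lmodType F) (R1 R2 : linrel V W) :
  is_linear_relation R1 -> is_linear_relation R2 ->
  is_linear_relation (rel_cap R1 R2).
Proof.
move=> [R1_00 R1_lin] [R2_00 R2_lin]; split => // a x y x' y' [? ?] [? ?].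
by split; [apply: R1_lin | apply: R2_lin].
Qed.

Lemma ran_I_plus_comp_sub (F : numFieldType) (V W : lmodType F)
    (A A' : linrel V W) (B B' : linrel W V) :
  (forall x y, A x y -> A' x y) -> (forall y x, B y x -> B' y x) ->
  forall v, ran_I_plus_comp A B v -> ran_I_plus_comp A' B' v.
Proof.
by move=> sAA' sBB' v [h [k [h' [Ahk [Bkh' ->]]]]]; exists h, k, h'; auto.
Qed.

Section ProductSpace.
Variables (F : numFieldType) (conj : {rmorphism F -> F}).
Variables (H K : lmodType F) (ipH : H -> H -> F) (ipK : K -> K -> F).
Hypotheses (ipH_inner : is_inner_product conj ipH)
           (ipK_inner : is_inner_product conj ipK).

Definition prod_ip (a b : H * K) : F := ipH a.1 b.1 + ipK a.2 b.2.

Lemma prod_ip_inner : is_inner_product conj prod_ip.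
Proof.
split.
- move=> a x y z; rewrite /prod_ip /=.
  by rewrite (ipDZl ipH_inner) (ipDZl ipK_inner); ring.
- by move=> x y; rewrite /prod_ip rmorphD -(ipC ipH_inner) -(ipC ipK_inner).
- move=> x; rewrite /prod_ip.
  by rewrite addr_ge0 ?(nrm2_ge0 ipH_inner) ?(nrm2_ge0 ipK_inner).
move=> [x1 x2] /eqP; rewrite /prod_ip /= paddr_eq0; last 2 first.
- exact: (nrm2_ge0 ipH_inner).
- exact: (nrm2_ge0 ipK_inner).
by case/andP => /eqP/(nrm2_eq0 ipH_inner) -> /eqP/(nrm2_eq0 ipK_inner) ->.
Qed.

Lemma prod_ip_complete :
  ip_complete ipH -> ip_complete ipK -> ip_complete prod_ip.
Proof.
move=> ipH_cplt ipK_cplt u u_cauchy.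
have [x1 to_x1] : exists x1, converges_to ipH (fun n => (u n).1) x1.
  apply: ipH_cplt => e e_gt0; have [N le_N] := u_cauchy e e_gt0.
  exists N => m n le_Nm le_Nn; apply: le_lt_trans (le_N m n le_Nm le_Nn).
  by rewrite /nrm2 /prod_ip lerDl (nrm2_ge0 ipK_inner).
have [x2 to_x2] : exists x2, converges_to ipK (fun n => (u n).2) x2.
  apply: ipK_cplt => e e_gt0; have [N le_N] := u_cauchy e e_gt0.
  exists N => m n le_Nm le_Nn; apply: le_lt_trans (le_N m n le_Nm le_Nn).
  by rewrite /nrm2 /prod_ip lerDr (nrm2_ge0 ipH_inner).
exists (x1, x2) => e e_gt0; have e2_gt0 : 0 < e / 2 by rewrite divr_gt0.
have [N1 le_N1] := to_x1 _ e2_gt0; have [N2 le_N2] := to_x2 _ e2_gt0.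
exists (maxn N1 N2) => n; rewrite geq_max => /andP[le_N1n le_N2n].
by rewrite /nrm2 /prod_ip [e]splitr ltrD ?le_N1 ?le_N2.
Qed.

End ProductSpace.

Section Adjoint.
Variables (F : numFieldType) (conj : {rmorphism F -> F}).
Hypothesis conj_normK : forall a : F, a * conj a = `|a| ^+ 2.
Variables (H K : lmodType F) (ipH : H -> H -> F) (ipK : K -> K -> F).
Hypotheses (ipH_inner : is_inner_product conj ipH)
           (ipK_inner : is_inner_product conj ipK).

Lemma adjoint_anti (R1 R2 : linrel H K) : (forall h k, R1 h k -> R2 h k) ->
  forall k h, adjoint ipH ipK R2 k h -> adjoint ipH ipK R1 k h.
Proof. by move=> sR12 k h R2_kh x y /sR12; apply: R2_kh. Qed.

Lemma sub_biadjoint (R : linrel H K) h k :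
  R h k -> adjoint ipK ipH (adjoint ipH ipK R) h k.
Proof.
move=> Rhk k' h' R_k'h'.
by rewrite (ipC ipH_inner) -(R_k'h' h k Rhk) -(ipC ipK_inner).
Qed.

Lemma adjoint_linear (R : linrel H K) : is_linear_relation (adjoint ipH ipK R).
Proof.
split=> [h k _|a k1 k2 h1 h2 R_kh1 R_kh2 h k Rhk].
  by rewrite (ip0r ipK_inner) (ip0r ipH_inner).
rewrite (ipDr ipK_inner) (ipZr ipK_inner) (ipDr ipH_inner) (ipZr ipH_inner).
by rewrite (R_kh1 h k Rhk) (R_kh2 h k Rhk).
Qed.

Lemma adjoint_closed (R : linrel H K) k h :
  adherent (prod_ip ipK ipH) (fun z => adjoint ipH ipK R z.1 z.2) (k, h) ->
  adjoint ipH ipK R k h.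
Proof.
move=> adh x y Rxy; apply/eqP; rewrite -subr_eq0; apply/eqP.
apply: (@eq0_of_sqr_norm_small _ _ (2 * (nrm2 ipK y + nrm2 ipH x))).
  rewrite ger0_real // mulr_ge0 // addr_ge0 //.
  - exact: (nrm2_ge0 ipK_inner).
  - exact: (nrm2_ge0 ipH_inner).
move=> e e_gt0; have [[k' h'] [R_kh' near']] := adh e e_gt0.
rewrite /nrm2 /prod_ip /= -/(nrm2 ipK _) -/(nrm2 ipH _) in near'.
have -> : ipK y k - ipH x h = ipK y (k - k') + - ipH x (h - h').
  by rewrite (ipBr ipK_inner) (ipBr ipH_inner) (R_kh' x y Rxy); ring.
have near_k : nrm2 ipK (k - k') <= e.
  by apply/ltW/(le_lt_trans _ near'); rewrite lerDl (nrm2_ge0 ipH_inner).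
have near_h : nrm2 ipH (h - h') <= e.
  by apply/ltW/(le_lt_trans _ near'); rewrite lerDr (nrm2_ge0 ipK_inner).
apply: le_trans (sqr_normD_le _ _) _; rewrite normrN -mulrA ler_pM2l // mulrDl.
apply: lerD.
- apply: le_trans (cauchy_schwarz conj_normK ipK_inner _ _) _.
  by apply: ler_wpM2l; first exact: (nrm2_ge0 ipK_inner).
- apply: le_trans (cauchy_schwarz conj_normK ipH_inner _ _) _.
  by apply: ler_wpM2l; first exact: (nrm2_ge0 ipH_inner).
Qed.

End Adjoint.

Lemma adjoint_eq_of_adjoint_cap_sub (F : numFieldType) (conj : {rmorphism F -> F})
    (H K : lmodType F) (ipH : H -> H -> F) (ipK : K -> K -> F)
    (S : linrel H K) (T : linrel K H) :
  is_inner_product conj ipH -> is_inner_product conj ipK ->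
  (forall k h, adjoint ipH ipK (rel_cap S (adjoint ipK ipH T)) k h ->
     rel_cap T (adjoint ipH ipK S) k h) ->
  rel_eq (adjoint ipH ipK S) T.
Proof.
move=> ipH_inner ipK_inner sub k h.
have S0_sub_S x y : rel_cap S (adjoint ipK ipH T) x y -> S x y by case.
have S0_sub_adjT x y :
  rel_cap S (adjoint ipK ipH T) x y -> adjoint ipK ipH T x y by case.
split=> [S_kh | T_kh]; first by case: (sub k h (adjoint_anti S0_sub_S S_kh)).
have := adjoint_anti S0_sub_adjT (sub_biadjoint ipK_inner ipH_inner T_kh).
by case/sub.
Qed.

Lemma densely_defined_sub (F : numFieldType) (V W : lmodType F)
    (ip : V -> V -> F) (R1 R2 : linrel V W) :
  (forall x y, R1 x y -> R2 x y) -> densely_defined ip R1 ->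
  densely_defined ip R2.
Proof.
move=> sR12 R1_dense v e e_gt0.
have [a [[b R1ab] near_a]] := R1_dense v e e_gt0.
by exists a; split=> //; exists b; apply: sR12.
Qed.

Section HilbertPair.
Variables (F : numFieldType) (conj : {rmorphism F -> F}).
Hypothesis conj_normK : forall a : F, a * conj a = `|a| ^+ 2.
Hypotheses (ge0_inf : ge0_has_inf F) (archi_invS : invS_archimedean F).
Variables (H K : lmodType F) (ipH : H -> H -> F) (ipK : K -> K -> F).
Hypotheses (ipH_inner : is_inner_product conj ipH)
           (ipK_inner : is_inner_product conj ipK).
Hypotheses (ipH_cplt : ip_complete ipH) (ipK_cplt : ip_complete ipK).

Lemma ran_I_plus_adjoint_comp (T : linrel K H) h :
  ran_I_plus_comp (adjoint ipK ipH T) (adjoint ipH ipK (adjoint ipK ipH T)) h.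
Proof.
have graph_sub := graph_subspace (adjoint_linear ipK_inner ipH_inner T).
have [[x y] [adh orth]] := projection conj_normK ge0_inf archi_invS
  (prod_ip_inner ipH_inner ipK_inner) graph_sub (h, 0)
  (prod_ip_complete ipH_inner ipK_inner ipH_cplt ipK_cplt).
exists x, y, (h - x); split; last split; last by rewrite addrC subrK.
  exact: (adjoint_closed conj_normK ipK_inner ipH_inner adh).
move=> a b T_ab; have := orth (a, b) T_ab.
rewrite /prod_ip /= sub0r (ipNr ipK_inner) => /eqP.
by rewrite subr_eq0 => /eqP ->.
Qed.

Lemma adjoint_sub_of_ran (A : linrel H K) (B : linrel K H) :
  is_linear_relation A -> is_linear_relation B ->
  (forall k h, B k h -> adjoint ipH ipK A k h) ->
  (forall h, ran_I_plus_comp A B h) -> (forall k, ran_I_plus_comp B A k) ->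
  forall k h, adjoint ipH ipK A k h -> B k h.
Proof.
move=> [_ A_lin] [_ B_lin] sBA ranAB ranBA k h A_kh.
have [x1 [y1 [h1 [A1 [B1 e1]]]]] := ranAB (- h).
have [y2 [h2 [k2 [B2 [A2 e2]]]]] := ranBA k.
set x := x1 + h2; set ax := y1 + k2; set z := y2 - y1; set bz := h2 - h1.
have Ax : A x ax by have := A_lin 1 _ _ _ _ A1 A2; rewrite !scale1r.
have Bz : B z bz.
  by have := B_lin (-1) _ _ _ _ B1 B2; rewrite !scaleN1r ![- _ + _]addrC.
have eh : h = bz - x.
  rewrite /bz /x -[h]opprK e1 opprD [x1 + h2]addrC opprD.
  by rewrite addrACA subrr add0r addrC.
have ek : k = ax + z by rewrite /ax /z e2 [RHS]addrC addrA subrK.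
have : nrm2 ipH x + nrm2 ipK ax = 0.
  have := A_kh x ax Ax; rewrite {1}ek eh (ipDr ipK_inner) (ipBr ipH_inner).
  rewrite (sBA z bz Bz x ax Ax) /nrm2 => /eqP.
  by rewrite -subr_eq0 => /eqP <-; ring.
move/eqP; rewrite paddr_eq0 ?(nrm2_ge0 ipH_inner) ?(nrm2_ge0 ipK_inner) //.
case/andP => /eqP/(nrm2_eq0 ipH_inner) x0 /eqP/(nrm2_eq0 ipK_inner) ax0.
by rewrite ek eh x0 ax0 add0r subr0.
Qed.

Lemma densely_defined_of_adjoint_operator (A : linrel H K) :
  is_linear_relation A -> is_operator (adjoint ipH ipK A) ->
  densely_defined ipH A.
Proof.
move=> A_lin [_ adj_op] v.
have [p [adh orth]] := projection conj_normK ge0_inf archi_invS ipH_inner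
  (dom_subspace A_lin) v ipH_cplt.
suff -> : v = p by [].
apply/eqP; rewrite -subr_eq0; apply/eqP/adj_op => x y Axy.
by rewrite (ip0r ipK_inner) orth //; exists y.
Qed.

Lemma ran_I_plus_of_adjoint_eq (S : linrel H K) (T : linrel K H) :
  rel_eq (adjoint ipH ipK S) T -> rel_eq (adjoint ipK ipH T) S ->
  forall h, ran_I_plus_comp (rel_cap S (adjoint ipK ipH T))
                            (rel_cap T (adjoint ipH ipK S)) h.
Proof.
move=> adjS adjT h; apply: ran_I_plus_comp_sub (ran_I_plus_adjoint_comp T h).
  by move=> x y adjT_xy; split=> //; apply/adjT.
move=> y x adj2T_yx; have adjS_yx : adjoint ipH ipK S y x.
  by apply: adjoint_anti adj2T_yx => a b /(adjT a b).2.
by split=> //; apply/adjS.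
Qed.

Lemma dense_adjoint_eq_of_ran (S : linrel H K) (T : linrel K H) :
  is_linear_relation S -> is_linear_relation T ->
  (forall w, T 0 w -> w = 0) ->
  (forall h, ran_I_plus_comp (rel_cap S (adjoint ipK ipH T))
                             (rel_cap T (adjoint ipH ipK S)) h) ->
  (forall k, ran_I_plus_comp (rel_cap T (adjoint ipH ipK S))
                             (rel_cap S (adjoint ipK ipH T)) k) ->
  densely_defined ipH S /\ rel_eq (adjoint ipH ipK S) T.
Proof.
set S0 := rel_cap S _; set T0 := rel_cap T _ => S_lin T_lin T_op ranST ranTS.
have S0_lin : is_linear_relation S0.
  exact: cap_linear S_lin (adjoint_linear ipK_inner ipH_inner T).
have T0_lin : is_linear_relation T0.
  exact: cap_linear T_lin (adjoint_linear ipH_inner ipK_inner S).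
have T0_sub_adjS0 k h : T0 k h -> adjoint ipH ipK S0 k h.
  by case=> _; apply: adjoint_anti => x y [].
have adjS0 := adjoint_sub_of_ran S0_lin T0_lin T0_sub_adjS0 ranST ranTS.
have adjS0_op : is_operator (adjoint ipH ipK S0).
  split=> [|w /adjS0 [/T_op] //]; exact: (adjoint_linear ipH_inner ipK_inner).
split; last exact: adjoint_eq_of_adjoint_cap_sub ipH_inner ipK_inner adjS0.
apply: densely_defined_sub (fun x y => @proj1 _ _) _.
exact: densely_defined_of_adjoint_operator S0_lin adjS0_op.
Qed.

End HilbertPair.

Theorem adjoint_pair_iff_ran (F : numFieldType) (conj : {rmorphism F -> F}) :
  (forall a : F, a * conj a = `|a| ^+ 2) ->
  ge0_has_inf F -> invS_archimedean F ->
  forall (H K : lmodType F) (ipH : H -> H -> F) (ipK : K -> K -> F)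
         (S : linrel H K) (T : linrel K H),
  is_hilbert conj ipH -> is_hilbert conj ipK ->
  is_operator S -> is_operator T ->
  let S0 := rel_cap S (adjoint ipK ipH T) in
  let T0 := rel_cap T (adjoint ipH ipK S) in
  [/\ densely_defined ipH S, densely_defined ipK T,
      rel_eq (adjoint ipH ipK S) T & rel_eq (adjoint ipK ipH T) S]
  <->
  (forall h, ran_I_plus_comp S0 T0 h) /\ (forall k, ran_I_plus_comp T0 S0 k).
Proof.
move=> conj_normK ge0_inf archi_invS H K ipH ipK S T [ipH_inner ipH_cplt]
  [ipK_inner ipK_cplt] [S_lin S_op] [T_lin T_op] S0 T0.
split=> [[_ _ adjS adjT] | [ranST ranTS]].
  by split; apply: (ran_I_plus_of_adjoint_eq conj_normK ge0_inf archi_invS).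
have [S_dense adjS] := dense_adjoint_eq_of_ran conj_normK ge0_inf archi_invS
  ipH_inner ipK_inner ipH_cplt S_lin T_lin T_op ranST ranTS.
have [T_dense adjT] := dense_adjoint_eq_of_ran conj_normK ge0_inf archi_invS
  ipK_inner ipH_inner ipK_cplt T_lin S_lin S_op ranTS ranST.
by split.
Qed.

Section RealScalars.
Variable R : realType.

Lemma ge0_has_inf_real : ge0_has_inf R.
Proof.
move=> A [a0 A_a0] A_ge0; have A_inf : classical_sets.has_inf A.
  by split; [exists a0 | exists 0 => a /A_ge0].
exists (inf A); split=> [a A_a|e e_gt0]; first by apply: ge_inf => //; exists 0.
by have [a A_a lt_a] := inf_adherent e_gt0 A_inf; exists a.
Qed.

Lemma invS_archimedean_real : invS_archimedean R.
Proof.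
move=> e e_gt0; have einv_ge0 : 0 <= e^-1 by rewrite invr_ge0 ltW.
exists (Num.Def.archi_bound e^-1).
rewrite -[ltRHS]invrK ltf_pV2 ?posrE ?ltr0Sn ?invr_gt0 //.
by apply: lt_trans (archi_boundP einv_ge0) _; rewrite ltr_nat.
Qed.

Local Open Scope complex_scope.

Lemma ge0_complexE (a : R[i]) :
  0 <= a -> a = (complex.Re a)%:C /\ 0 <= complex.Re a.
Proof. by case: a => x y; rewrite lecE /= => /andP[/eqP -> ->]. Qed.

Lemma ge0_has_inf_complex : ge0_has_inf R[i].
Proof.
move=> A [a0 A_a0] A_ge0.
have [d [d_lb d_approx]] : exists d, (forall r, A r%:C -> d <= r) /\
    (forall e, 0 < e -> exists r, A r%:C /\ r < d + e).
  apply: ge0_has_inf_real => [|r /A_ge0]; last by rewrite lecR.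
  by exists (complex.Re a0); rewrite -(ge0_complexE (A_ge0 _ A_a0)).1.
exists d%:C; split=> [a A_a|e e_gt0].
  have [-> _] := ge0_complexE (A_ge0 _ A_a).
  by rewrite lecR d_lb // -(ge0_complexE (A_ge0 _ A_a)).1.
have [-> e_re_gt0] : e = (complex.Re e)%:C /\ 0 < complex.Re e.
  by case: e e_gt0 => x y; rewrite ltcE /= => /andP[/eqP -> ->].
have [r [A_r lt_r]] := d_approx _ e_re_gt0.
by exists r%:C; rewrite -rmorphD ltcR.
Qed.

Lemma invS_archimedean_complex : invS_archimedean R[i].
Proof.
case=> x y; rewrite ltcE /= => /andP[/eqP -> /invS_archimedean_real [N lt_N]].
exists N; have -> : N.+1%:R^-1 = (N.+1%:R^-1)%:C :> R[i].
  by rewrite fmorphV rmorph_nat.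
by rewrite ltcR.
Qed.

End RealScalars.

Theorem theorem3p9 (R : realType) :
  (forall (H K : lmodType R) (ipH : H -> H -> R) (ipK : K -> K -> R)
          (S : linrel H K) (T : linrel K H),
     is_hilbert (@idfun R) ipH -> is_hilbert (@idfun R) ipK ->
     is_operator S -> is_operator T ->
     let S0 := rel_cap S (adjoint ipK ipH T) in
     let T0 := rel_cap T (adjoint ipH ipK S) in
     ([/\ densely_defined ipH S, densely_defined ipK T,
          rel_eq (adjoint ipH ipK S) T & rel_eq (adjoint ipK ipH T) S]
      <->
      ((forall h : H, ran_I_plus_comp S0 T0 h) /\
       (forall k : K, ran_I_plus_comp T0 S0 k))))
  /\
  (forall (H K : lmodType R[i]) (ipH : H -> H -> R[i]) (ipK : K -> K -> R[i])
          (S : linrel H K) (T : linrel K H),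
     is_hilbert (@Num.conj R[i]) ipH -> is_hilbert (@Num.conj R[i]) ipK ->
     is_operator S -> is_operator T ->
     let S0 := rel_cap S (adjoint ipK ipH T) in
     let T0 := rel_cap T (adjoint ipH ipK S) in
     ([/\ densely_defined ipH S, densely_defined ipK T,
          rel_eq (adjoint ipH ipK S) T & rel_eq (adjoint ipK ipH T) S]
      <->
      ((forall h : H, ran_I_plus_comp S0 T0 h) /\
       (forall k : K, ran_I_plus_comp T0 S0 k)))).
Proof.
split=> H K ipH ipK S T.
- have normK (a : R) : a * idfun a = `|a| ^+ 2.
    by rewrite real_normK ?num_real // expr2.
  exact: (@adjoint_pair_iff_ran R idfun normK (@ge0_has_inf_real R)
    (@invS_archimedean_real R)).
- have normK (a : R[i]) : a * Num.conj a = `|a| ^+ 2 by rewrite normCK.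
  exact: (@adjoint_pair_iff_ran R[i] Num.conj normK (@ge0_has_inf_complex R)
    (@invS_archimedean_complex R)).
Qed.
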